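(* Let $n\ge 2$, let $\mathbf{e}_1,\dots,\mathbf{e}_n$ be the standard basis of $\mathbb{R}^n$, $\mathbf{v}_1=(1,\dots,1)^T$, and define $\mathbf{e}_i'=\frac{1-\sqrt{n+1}}{n}\mathbf{v}_1+\sqrt{n+1}\,\mathbf{e}_i$ for $i=1,\dots,n$. Then the lattice $\mathcal{L}\subset\mathbb{R}^n$ with basis $\{\mathbf{e}_1',\dots,\mathbf{e}_n'\}$ is tame, with Lagrangian basis $\{\mathbf{e}_i'\}$, vector $\mathbf{v}_1$, and $(a,h)=(n,1)$. Moreover, for every integer $r$ with $0<|r|<n$, $\mathcal{L}_{\mathbf{v}_1}^{(r,r)}$ is a sublattice of $\mathcal{L}$ with $\mathcal{L}_{\mathbf{v}_1}^{(r,r)}\cong|r|\sqrt{n+1}\,A_n$.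
   Context: Tame lattice: a full-rank lattice $\mathcal{L}\subset\mathbb{R}^n$ with a basis $\{\mathbf{e}_1,\dots,\mathbf{e}_n\}$ (Lagrangian basis) and nonzero $\mathbf{v}_1\in\mathcal{L}\cap\mathcal{L}^*$ such that $\sum_i\mathbf{e}_i=\mathbf{v}_1$, $\langle\mathbf{e}_i,\mathbf{v}_1\rangle=1$, $\langle\mathbf{e}_i,\mathbf{e}_i\rangle=a$, $\langle\mathbf{e}_i,\mathbf{e}_j\rangle=-h$ ($i\ne j$). $\mathcal{L}^{(r,s)}_{\mathbf{v}_1}$ is the image of $\mathcal{L}$ under $\mathbf{x}\mapsto r\mathbf{x}+s\langle\mathbf{x},\mathbf{v}_1\rangle\mathbf{v}_1$. $A_n=\{\mathbf{x}\in\mathbb{Z}^{n+1}:\sum_i x_i=0\}$. $\Lambda\cong\Lambda'$ means there is a linear isometry between the real spans carrying one lattice onto the other; $c\Lambda$ denotes scaling by $c>0$. *)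

From HB Require Import structures.
From mathcomp Require Import all_boot all_order all_algebra.
From mathcomp Require Import reals.
Set Implicit Arguments. Unset Strict Implicit. Unset Printing Implicit Defensive.
Import Order.TTheory GRing.Theory Num.Theory.
Local Open Scope ring_scope.

Section Defs.
Variable R : realType.

Definition dot (m : nat) (u v : 'rV[R]_m) : R := \sum_(i < m) u 0 i * v 0 i.

Definition latt (k m : nat) (b : 'I_k -> 'rV[R]_m) : 'rV[R]_m -> Prop :=
  fun x => exists c : 'I_k -> int, x = \sum_(i < k) (c i)%:~R *: b i.

Definition rspan (m : nat) (L : 'rV[R]_m -> Prop) : 'rV[R]_m -> Prop :=
  fun x => exists (k : nat) (c : 'I_k -> R) (y : 'I_k -> 'rV[R]_m),
    (forall i, L (y i)) /\ x = \sum_(i < k) c i *: y i.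

Definition dual_mem (m : nat) (L : 'rV[R]_m -> Prop) (y : 'rV[R]_m) : Prop :=
  rspan L y /\ forall x, L x -> exists z : int, dot y x = z%:~R.

(* the lattice generated by b (full rank: b a basis of R^n) is tame,
   with Lagrangian basis b, vector v and parameters (a,h) *)
Definition tame_with (n : nat) (b : 'I_n -> 'rV[R]_n) (v : 'rV[R]_n) (a h : R)
  : Prop :=
  \det (\matrix_(i < n, j < n) b i 0 j) != 0 /\
  v != 0 /\ latt b v /\ dual_mem (latt b) v /\
  \sum_(i < n) b i = v /\
  (forall i, dot (b i) v = 1) /\
  (forall i, dot (b i) (b i) = a) /\
  (forall i j, i != j -> dot (b i) (b j) = - h).

(* L^{(r,s)}_v : image of L under x |-> r x + s <x,v> v *)
Definition twist (m : nat) (r s : R) (v : 'rV[R]_m) (L : 'rV[R]_m -> Prop)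
  : 'rV[R]_m -> Prop :=
  fun y => exists x, L x /\ y = r *: x + (s * dot x v) *: v.

Definition lscale (m : nat) (c : R) (L : 'rV[R]_m -> Prop) : 'rV[R]_m -> Prop :=
  fun y => exists x, L x /\ y = c *: x.

Definition A_lat (n : nat) : 'rV[R]_n.+1 -> Prop :=
  fun x => (forall i, exists z : int, x 0 i = z%:~R) /\ \sum_(i < n.+1) x 0 i = 0.

Definition lat_iso (m k : nat) (L : 'rV[R]_m -> Prop) (L' : 'rV[R]_k -> Prop)
  : Prop :=
  exists M : 'M[R]_(m, k),
    (forall x y, rspan L x -> rspan L y -> dot (x *m M) (y *m M) = dot x y) /\
    (forall x, L x -> L' (x *m M)) /\
    (forall y, L' y -> exists x, L x /\ y = x *m M).

End Defs.

(* Let s = sqrt (n+1) and e'_i = alpha v1 + s e_i with alpha = (1 - s)/n, so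
   that alpha n = 1 - s.  Direct computation gives sum_i e'_i = v1,
   <e'_i, v1> = 1 and <e'_i, e'_j> = s^2 [i = j] - 1, which (with the
   invertibility of the matrix alpha J + s I) is tameness with (a, h) = (n, 1).

   For the twist, a lattice L = Z b whose generators satisfy <b_i, v> = 1 has
   L^{(r,s)}_v = Z (r b_i + s v) (twist_latt).  Here the generators
   r (e'_i + v1) have Gram matrix r^2 s^2 (I + J), which is also the Gram
   matrix of the scaled simple roots |r| s (e_i - e_{n+1}) of A_n.  The general
   fact that two bases with equal Gram matrices span isometric lattices
   (lat_iso_gram, via the map (rows b)^-1 (rows b')) then yields the
   isomorphism, and the sublattice property holds because the new generators
   are integer combinations of the e'_i. *)

From HB Require Import structures.
From mathcomp Require Import all_boot all_order all_algebra.
From mathcomp Require Import reals.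
From mathcomp Require Import ring.
Import Order.TTheory GRing.Theory Num.Theory.
Set Implicit Arguments. Unset Strict Implicit. Unset Printing Implicit Defensive.
Local Open Scope ring_scope.

Section InnerProduct.
Variables (R : realType) (m : nat).
Implicit Types (u v w : 'rV[R]_m).

Lemma dotC u v : dot u v = dot v u.
Proof. by rewrite /dot; apply: eq_bigr => i _; rewrite mulrC. Qed.

Lemma dotDl u w v : dot (u + w) v = dot u v + dot w v.
Proof. by rewrite /dot -big_split; apply: eq_bigr => i _; rewrite mxE mulrDl. Qed.

Lemma dotZl a u v : dot (a *: u) v = a * dot u v.
Proof. by rewrite /dot mulr_sumr; apply: eq_bigr => i _; rewrite mxE mulrA. Qed.

Lemma dotBl u w v : dot (u - w) v = dot u v - dot w v.
Proof. by rewrite dotDl -scaleN1r dotZl mulN1r. Qed.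

Lemma dotDr u w v : dot v (u + w) = dot v u + dot v w.
Proof. by rewrite dotC dotDl !(dotC _ v). Qed.

Lemma dotZr a u v : dot v (a *: u) = a * dot v u.
Proof. by rewrite dotC dotZl dotC. Qed.

Lemma dotBr u w v : dot v (u - w) = dot v u - dot v w.
Proof. by rewrite dotC dotBl !(dotC _ v). Qed.

Lemma dot_suml (I : Type) (r : seq I) (P : pred I) (F : I -> 'rV[R]_m) v :
  dot (\sum_(i <- r | P i) F i) v = \sum_(i <- r | P i) dot (F i) v.
Proof.
elim/big_rec2: _ => [|i x y _ <-]; last by rewrite dotDl.
by rewrite /dot big1 // => i _; rewrite mxE mul0r.
Qed.

Lemma dot_mx u v : dot u v = (u *m v^T) 0 0.
Proof. by rewrite /dot mxE; apply: eq_bigr => i _; rewrite mxE. Qed.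

Lemma dot_delta (i j : 'I_m) : dot (delta_mx 0 i) (delta_mx 0 j) = (i == j)%:R :> R.
Proof.
rewrite /dot (bigD1 i) //= big1 => [|k /negbTE ki].
  by rewrite !mxE !eqxx mul1r addr0.
by rewrite !mxE ki mul0r.
Qed.

Lemma dot_delta_const (i : 'I_m) : dot (delta_mx 0 i) (const_mx 1) = 1 :> R.
Proof.
rewrite /dot (bigD1 i) //= big1 => [|k /negbTE ki].
  by rewrite !mxE !eqxx mulr1 addr0.
by rewrite !mxE ki mul0r.
Qed.

Lemma dot_const : dot (const_mx 1 : 'rV[R]_m) (const_mx 1) = m%:R.
Proof.
by rewrite /dot; under eq_bigr do rewrite !mxE mulr1; rewrite sumr_const card_ord.
Qed.

Lemma sum_delta : \sum_(i < m) delta_mx 0 i = const_mx 1 :> 'rV[R]_m.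
Proof.
apply/rowP => k; rewrite summxE (bigD1 k) //= big1 => [|j jk].
  by rewrite !mxE !eqxx addr0.
by rewrite !mxE eq_sym (negbTE jk).
Qed.

End InnerProduct.

Section AllOnesMatrix.
Variables (R : realType) (m : nat).

(* The matrix a J + c I (J the all-ones matrix) is invertible when c and
   a m + c are nonzero; its inverse is c^-1 I - a / (c (a m + c)) J. *)
Lemma unitmx_const_scalar (a c : R) :
  c != 0 -> a * m%:R + c != 0 ->
  a *: const_mx 1 + c%:M \in (unitmx : pred 'M[R]_m).
Proof.
move=> c0 ac0; pose J : 'M[R]_m := const_mx 1.
have JJ : J *m J = m%:R *: J.
  apply/matrixP => i j; rewrite !mxE; under eq_bigr do rewrite !mxE mulr1.
  by rewrite sumr_const card_ord mulr1.
suff /mulmx1_unit[] : (a *: J + c%:M) *m (c^-1%:M - (a / (c * (a * m%:R + c))) *: J)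
                      = 1%:M by [].
rewrite mulmxDl !mulmxBr -!scalemxAl -!scalemxAr JJ !mul_mx_scalar !mul_scalar_mx.
apply/matrixP => i j; rewrite !mxE.
by case: (i == j); rewrite /= ?mulr1n ?mulr0n; field; rewrite ac0 c0.
Qed.

End AllOnesMatrix.

Section IntegerSpans.
Variables (R : realType) (k m : nat) (b : 'I_k -> 'rV[R]_m).

Lemma latt0 : latt b 0.
Proof. by exists (fun=> 0); rewrite big1 // => i _; rewrite scale0r. Qed.

Lemma latt_add x y : latt b x -> latt b y -> latt b (x + y).
Proof.
move=> [c ->] [d ->]; exists (fun i => c i + d i).
by rewrite -big_split; apply: eq_bigr => i _; rewrite intrD scalerDl.
Qed.

Lemma latt_zscale (z : int) x : latt b x -> latt b (z%:~R *: x).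
Proof.
move=> [c ->]; exists (fun i => z * c i).
by rewrite scaler_sumr; apply: eq_bigr => i _; rewrite scalerA intrM.
Qed.

Lemma latt_gen i : latt b (b i).
Proof.
exists (fun j => (j == i)%:R); rewrite (bigD1 i) //= big1 => [|j /negbTE ->].
  by rewrite eqxx scale1r addr0.
by rewrite scale0r.
Qed.

Lemma latt_sub (l : nat) (f : 'I_l -> 'rV[R]_m) x :
  (forall i, latt b (f i)) -> latt f x -> latt b x.
Proof.
move=> bf [c ->]; apply: (big_ind (latt b)); first exact: latt0.
  exact: latt_add.
by move=> i _; apply: latt_zscale.
Qed.

Lemma lscale_latt (a : R) y : lscale a (latt b) y <-> latt (fun i => a *: b i) y.
Proof.
split=> [[_ [[c ->] ->]]|[c ->]].
  by exists c; rewrite scaler_sumr; apply: eq_bigr => i _; rewrite !scalerA mulrC.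
exists (\sum_(i < k) (c i)%:~R *: b i); split; first by exists c.
by rewrite scaler_sumr; apply: eq_bigr => i _; rewrite !scalerA mulrC.
Qed.

Lemma dot_latt (c : 'I_k -> int) u :
  dot (\sum_(i < k) (c i)%:~R *: b i) u = \sum_(i < k) (c i)%:~R * dot (b i) u.
Proof. by rewrite dot_suml; apply: eq_bigr => i _; rewrite dotZl. Qed.

Lemma twist_latt (r s : R) (v : 'rV[R]_m) y :
  (forall i, dot (b i) v = 1) ->
  twist r s v (latt b) y <-> latt (fun i => r *: b i + s *: v) y.
Proof.
move=> bv.
have twistE (c : 'I_k -> int) : let x := \sum_(i < k) (c i)%:~R *: b i in
    r *: x + (s * dot x v) *: v = \sum_(i < k) (c i)%:~R *: (r *: b i + s *: v).
  rewrite /= dot_latt; under [RHS]eq_bigr do rewrite scalerDr !scalerA.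
  rewrite big_split /= -scaler_suml scaler_sumr mulr_sumr.
  congr (_ + _); last by congr (_ *: _); apply: eq_bigr => i _; rewrite bv mulr1 mulrC.
  by apply: eq_bigr => i _; rewrite scalerA mulrC.
split=> [[_ [[c ->] ->]]|[c ->]]; first by exists c; exact: twistE.
by exists (\sum_(i < k) (c i)%:~R *: b i); split; [exists c | rewrite twistE].
Qed.

End IntegerSpans.

Section GramIsometry.
Variable R : realType.

Definition rows (k m : nat) (b : 'I_k -> 'rV[R]_m) : 'M[R]_(k, m) :=
  \matrix_(i, j) b i 0 j.

Lemma row_rows (k m : nat) (b : 'I_k -> 'rV[R]_m) i : row i (rows b) = b i.
Proof. by apply/rowP => j; rewrite !mxE. Qed.

Lemma gram_rows (k m : nat) (b : 'I_k -> 'rV[R]_m) i j :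
  (rows b *m (rows b)^T) i j = dot (b i) (b j).
Proof. by rewrite mxE; apply: eq_bigr => l _; rewrite !mxE. Qed.

Lemma dot_mulmx (k m : nat) (A : 'M[R]_(k, m)) (u u' : 'rV[R]_k) :
  dot (u *m A) (u' *m A) = (u *m (A *m A^T) *m u'^T) 0 0.
Proof. by rewrite dot_mx trmx_mul !mulmxA. Qed.

(* Two bases with the same Gram matrix span isometric lattices: when b is a
   basis of R^k, the matrix (rows b)^-1 (rows b') is an isometry of R^k
   carrying every b i to b' i, hence latt b onto latt b'. *)
Lemma lat_iso_gram (k p : nat) (b : 'I_k -> 'rV[R]_k) (b' : 'I_k -> 'rV[R]_p)
    (L : 'rV[R]_k -> Prop) (L' : 'rV[R]_p -> Prop) :
  (forall x, L x <-> latt b x) -> (forall y, L' y <-> latt b' y) ->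
  rows b \in unitmx -> (forall i j, dot (b i) (b j) = dot (b' i) (b' j)) ->
  lat_iso L L'.
Proof.
move=> Lb L'b' ub gram; set B := rows b; set B' := rows b'.
pose M := invmx B *m B'; exists M.
have gramB : B' *m B'^T = B *m B^T.
  by apply/matrixP => i j; rewrite !gram_rows gram.
have Mb i : b i *m M = b' i.
  by rewrite -!row_rows !rowE mulmxA -(mulmxA _ B) mulmxV // mulmx1.
have Mcomb (c : 'I_k -> int) :
    (\sum_(i < k) (c i)%:~R *: b i) *m M = \sum_(i < k) (c i)%:~R *: b' i.
  by rewrite mulmx_suml; apply: eq_bigr => i _; rewrite -scalemxAl Mb.
split.
  move=> x y _ _; have BK z : z = z *m invmx B *m B by rewrite -mulmxA mulVmx ?mulmx1.
  by rewrite /M !mulmxA dot_mulmx gramB -dot_mulmx -!BK.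
split=> [x /Lb [c ->]|y /L'b' [c ->]]; first by apply/L'b'; exists c.
by exists (\sum_(i < k) (c i)%:~R *: b i); split; [apply/Lb; exists c | rewrite Mcomb].
Qed.

End GramIsometry.

Section RootLatticeA.
Variables (R : realType) (n : nat).

Definition root_A (i : 'I_n) : 'rV[R]_n.+1 :=
  delta_mx 0 (widen_ord (leqnSn n) i) - delta_mx 0 ord_max.

Lemma dot_root_A (i j : 'I_n) : dot (root_A i) (root_A j) = (i == j)%:R + 1.
Proof.
have neq_max l : (widen_ord (leqnSn n) l == ord_max) = false.
  by apply/negbTE; rewrite -val_eqE /= neq_ltn ltn_ord.
have widen_eq : (widen_ord (leqnSn n) i == widen_ord (leqnSn n) j) = (i == j).
  by rewrite -[LHS]val_eqE.
rewrite !(dotBl, dotBr, dot_delta) widen_eq neq_max [ord_max == _]eq_sym neq_max eqxx.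
by rewrite subr0 sub0r opprK.
Qed.

(* An integer vector x with coordinate sum 0 equals
   sum_i x_i (e_i - e_{n+1}); conversely such combinations are integral
   and orthogonal to (1, ..., 1). *)
Lemma A_lat_latt x : A_lat x <-> latt root_A x.
Proof.
split=> [[xZ x0]|[c ->]].
  have [c xc] : exists c : 'I_n -> int,
      forall i, x 0 (widen_ord (leqnSn n) i) = (c i)%:~R.
    exact: fin_all_exists (fun i => xZ _).
  have x_max : x 0 ord_max = - \sum_(i < n) (c i)%:~R.
    move: x0; rewrite big_ord_recr /= => /eqP; rewrite addrC addr_eq0 => /eqP ->.
    by under eq_bigr do rewrite xc.
  exists c; rewrite {1}(row_sum_delta x) big_ord_recr /= x_max.
  under eq_bigr do rewrite xc.
  rewrite scaleNr scaler_suml -sumrB.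
  by apply: eq_bigr => i _; rewrite scalerBr.
split.
  move=> l; exists (\sum_(i < n) c i * ((l == widen_ord (leqnSn n) i)%:Z - (l == ord_max)%:Z)).
  rewrite summxE rmorph_sum; apply: eq_bigr => i _.
  by rewrite !mxE rmorphM rmorphB.
transitivity (dot (\sum_(i < n) (c i)%:~R *: root_A i) (const_mx 1)).
  by apply: eq_bigr => l _; rewrite !mxE mulr1.
by rewrite dot_latt big1 // => i _; rewrite dotBl !dot_delta_const subrr mulr0.
Qed.

End RootLatticeA.

Section SimplexLattice.
Variables (R : realType) (n : nat) (s : R).
Hypotheses (n_gt0 : (0 < n)%N) (s_sq : s * s = n.+1%:R).

Let v1 : 'rV[R]_n := const_mx 1.
Let alpha : R := (1 - s) / n%:R.

(* The basis e'_i = alpha v1 + s e_i, for any s with s^2 = n + 1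
   (the theorem takes s = sqrt (n + 1)). *)
Definition simplex_basis (i : 'I_n) : 'rV[R]_n := alpha *: v1 + s *: delta_mx 0 i.
Local Notation e := simplex_basis.

Let nE : n%:R = s * s - 1 :> R.
Proof. by rewrite s_sq mulrS addrC addrK. Qed.

Let n_neq0 : s * s - 1 != 0.
Proof. by rewrite -nE pnatr_eq0 -lt0n. Qed.

Let s_neq0 : s != 0.
Proof. by apply: contra_eq_neq s_sq => ->; rewrite mul0r eq_sym pnatr_eq0. Qed.

Let alpha_n : alpha * n%:R = 1 - s.
Proof. by rewrite divfK // pnatr_eq0 -lt0n. Qed.

Lemma sum_simplex_basis : \sum_(i < n) e i = v1.
Proof.
rewrite big_split /= sumr_const card_ord -scaler_sumr sum_delta -scaler_nat scalerA.
by rewrite -scalerDl mulrC alpha_n subrK scale1r.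
Qed.

Lemma dot_simplex_v1 i : dot (e i) v1 = 1.
Proof.
by rewrite dotDl !dotZl dot_const dot_delta_const mulr1 alpha_n subrK.
Qed.

Lemma dot_simplex i j : dot (e i) (e j) = s * s * (i == j)%:R - 1.
Proof.
rewrite !(dotDl, dotDr, dotZl, dotZr) dot_const dot_delta_const.
rewrite dotC dot_delta_const dot_delta /alpha nE.
by field; rewrite n_neq0.
Qed.

(* rows e' = alpha J + s I is invertible: alpha n + s = 1. *)
Lemma simplex_basis_unitmx : rows e \in unitmx.
Proof.
have -> : rows e = alpha *: const_mx 1 + s%:M.
  by apply/matrixP => i j; rewrite !mxE eqxx /= mulr_natr eq_sym.
apply: unitmx_const_scalar; first exact: s_neq0.
by rewrite alpha_n subrK oner_neq0.
Qed.

Lemma v1_latt : latt e v1.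
Proof.
by exists (fun=> 1); rewrite -sum_simplex_basis; apply: eq_bigr => i _; rewrite scale1r.
Qed.

(* v1 lies in L^*: <v1, sum c_i e'_i> = sum c_i is an integer. *)
Lemma v1_dual : dual_mem (latt e) v1.
Proof.
split.
  exists 1%N, (fun=> 1), (fun=> v1); rewrite big_ord1 scale1r.
  by split=> // _; exact: v1_latt.
move=> _ [c ->]; exists (\sum_(i < n) c i).
rewrite dotC dot_latt rmorph_sum; apply: eq_bigr => i _.
by rewrite dot_simplex_v1 mulr1.
Qed.

Lemma simplex_tame : tame_with e v1 n%:R 1.
Proof.
have v1_neq0 : v1 != 0.
  by apply/negP => /eqP/rowP/(_ (Ordinal n_gt0)); rewrite !mxE; apply/eqP/oner_neq0.
split; first by move: simplex_basis_unitmx; rewrite unitmxE unitfE.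
split; first exact: v1_neq0.
split; first exact: v1_latt.
split; first exact: v1_dual.
split; first exact: sum_simplex_basis.
split; first exact: dot_simplex_v1.
split; first by move=> i; rewrite dot_simplex eqxx mulr1 nE.
by move=> i j /negbTE ij; rewrite dot_simplex ij mulr0 sub0r.
Qed.

(* Generators r e'_i + r v1 of the twisted lattice L^{(r,r)}_{v1}
   (lemma twist_latt); their Gram matrix is r^2 s^2 (I + J). *)
Definition twisted_basis (r : R) (i : 'I_n) : 'rV[R]_n := r *: e i + r *: v1.

Lemma dot_twisted r i j :
  dot (twisted_basis r i) (twisted_basis r j) = r ^+ 2 * (s * s) * ((i == j)%:R + 1).
Proof.
rewrite /twisted_basis -!scalerDr dotZl dotZr dotDl (dotDr _ _ (e i)) (dotDr _ _ v1).
by rewrite dot_simplex dot_simplex_v1 dotC dot_simplex_v1 dot_const nE; ring.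
Qed.

(* rows of the twisted basis = r (alpha + 1) J + r s I, invertible for r != 0
   since r (alpha + 1) n + r s = r (n + 1). *)
Lemma twisted_unitmx r : r != 0 -> rows (twisted_basis r) \in unitmx.
Proof.
move=> r0; have -> : rows (twisted_basis r) = (r * (alpha + 1)) *: const_mx 1 + (r * s)%:M.
  apply/matrixP => i j; rewrite !mxE eqxx /= mulr_natr eq_sym.
  by case: (i == j); rewrite ?mulr1n ?mulr0n; ring.
apply: unitmx_const_scalar; first exact: mulf_neq0 r0 s_neq0.
have -> : r * (alpha + 1) * n%:R + r * s = r * (alpha * n%:R + s + n%:R) by ring.
by rewrite alpha_n subrK nat1r mulf_neq0 // pnatr_eq0.
Qed.

(* L^{(r,r)}_{v1} is a sublattice of L: its generators r (e'_i + v1) lie in L. *)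
Lemma twist_sublattice (r : int) y :
  twist r%:~R r%:~R v1 (latt e) y -> latt e y.
Proof.
move=> /twist_latt -/(_ dot_simplex_v1); apply: latt_sub => i.
by rewrite -scalerDr; apply/latt_zscale/latt_add; [exact: latt_gen | exact: v1_latt].
Qed.

(* L^{(r,r)}_{v1} ~= |r| s A_n: the generators of the former and the scaled
   simple roots of A_n have the same Gram matrix r^2 s^2 (I + J). *)
Lemma twist_iso_A (r : int) : r != 0 ->
  lat_iso (twist r%:~R r%:~R v1 (latt e)) (lscale (`|r|%:~R * s) (@A_lat R n)).
Proof.
move=> r0; apply: (@lat_iso_gram _ _ _ (twisted_basis r%:~R)
                                 (fun i => (`|r|%:~R * s) *: root_A R i)).
- by move=> x; apply: twist_latt; exact: dot_simplex_v1.
- move=> y; rewrite -lscale_latt; split=> [[x [/A_lat_latt Ax ->]]|[x [Ax ->]]].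
    by exists x.
  by exists x; split => //; apply/A_lat_latt.
- by apply: twisted_unitmx; rewrite intr_eq0.
move=> i j; rewrite dot_twisted dotZl dotZr dot_root_A intr_norm.
by rewrite -real_normK ?num_real //; ring.
Qed.

End SimplexLattice.

(* The theorem for s = sqrt (n + 1). *)
Theorem mainTheorem8 (R : realType) (n : nat) :
  (2 <= n)%N ->
  let v1 : 'rV[R]_n := const_mx 1 in
  let e' : 'I_n -> 'rV[R]_n := fun i =>
    ((1 - Num.sqrt (n.+1)%:R) / n%:R) *: v1
    + Num.sqrt (n.+1)%:R *: delta_mx 0 i in
  tame_with e' v1 n%:R 1 /\
  (forall r : int, r != 0 -> `|r| < n%:Z ->
     (forall y, twist r%:~R r%:~R v1 (latt e') y -> latt e' y) /\
     lat_iso (twist r%:~R r%:~R v1 (latt e'))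
             (lscale (`|r|%:~R * Num.sqrt (n.+1)%:R) (@A_lat R n))).
Proof.
move=> n2 v1 e'; have n_gt0 : (0 < n)%N by exact: leq_trans n2.
have s_sq : Num.sqrt (n.+1)%:R * Num.sqrt (n.+1)%:R = n.+1%:R :> R.
  by rewrite -expr2 sqr_sqrtr // ler0n.
split; first exact: simplex_tame n_gt0 s_sq.
move=> r r0 _; split; first exact: twist_sublattice n_gt0 r.
exact: twist_iso_A n_gt0 s_sq r r0.
Qed.
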